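(* Every D-cube has property L.
   Context: For sets $U,V$ let $U\oplus V=(U\cup V)\setminus(U\cap V)$. An $n$-cube orientation is a directed graph $\mathcal{O}$ on the vertex set of all subsets of $[n]$ containing, for each vertex $V$ and $i\in[n]$, exactly one of the directed edges $(V,V\oplus\{i\})$, $(V\oplus\{i\},V)$; its outmap is $\phi(V)=\{i: (V,V\oplus\{i\})\in\mathcal{O}\}$, which determines $\mathcal{O}$. For a vertex $V$, the L-graph $\mathcal{L}_{\mathcal{O}}(V)$ has vertex set $[n]\setminus V$ and an arc $(i,j)$ for distinct $i,j\notin V$ whenever $j\in\phi(V)\oplus\phi(V\cup\{i\})$; $\mathcal{O}$ has property L if all its L-graphs are acyclic. Given $M\in\mathbb{R}^{n\times n}$ and $V\subseteq[n]$, let $M(V)$ be the $n\times n$ matrix whose $i$-th column is $-M_i$ (the negative of the $i$-th column of $M$) if $i\in V$ and the $i$-th unit vector $I_i$ if $i\notin V$. A D-cube is an $n$-cube orientation whose outmap is $\phi(V)=\{i\in[n]: (M(V)^{-1}\mathbf{q})_i<0\}$ for all $V\subseteq[n]$, where $M$ is a symmetric positive definite matrix and $\mathbf{q}\in\mathbb{R}^n$ is generic with respect to $M$, meaning that no entry of $M(V)^{-1}\mathbf{q}$ is zero for any $V\subseteq[n]$. (Such an orientation is a unique sink orientation: every face has exactly one sink.) *)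

From HB Require Import structures.
From mathcomp Require Import all_boot all_order all_algebra.
From mathcomp Require Import reals.
Set Implicit Arguments. Unset Strict Implicit. Unset Printing Implicit Defensive.
Import Order.TTheory GRing.Theory Num.Theory.
Local Open Scope ring_scope.

Definition setSD (T : finType) (U V : {set T}) : {set T} :=
  (U :|: V) :\: (U :&: V).

Definition MV (R : pzRingType) (n : nat) (M : 'M[R]_n) (V : {set 'I_n}) : 'M[R]_n :=
  \matrix_(k < n, i < n) (if i \in V then - M k i else (k == i)%:R).

Definition sym_posdef (R : realType) (n : nat) (M : 'M[R]_n) : Prop :=
  M^T = M /\ forall x : 'cV[R]_n, x != 0 -> 0 < (x^T *m M *m x) 0 0.

Definition generic_wrt (R : realType) (n : nat) (M : 'M[R]_n) (q : 'cV[R]_n) : Prop :=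
  forall (V : {set 'I_n}) (i : 'I_n), (invmx (MV M V) *m q) i 0 != 0.

Definition Dcube_outmap (R : realType) (n : nat) (M : 'M[R]_n) (q : 'cV[R]_n)
  (V : {set 'I_n}) : {set 'I_n} :=
  [set i | (invmx (MV M V) *m q) i 0 < 0].

Definition Lgraph (n : nat) (phi : {set 'I_n} -> {set 'I_n}) (V : {set 'I_n})
  : rel 'I_n :=
  fun i j => [&& i != j, i \notin V, j \notin V & j \in setSD (phi V) (phi (i |: V))].

Definition acyclic (T : eqType) (e : rel T) : Prop :=
  forall s : seq T, s != [::] -> ~~ cycle e s.

Definition property_L (n : nat) (phi : {set 'I_n} -> {set 'I_n}) : Prop :=
  forall V : {set 'I_n}, acyclic (Lgraph phi V).

From HB Require Import structures.
From mathcomp Require Import all_boot all_order all_algebra.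
From mathcomp Require Import reals.
From mathcomp Require Import ring lra.
Set Implicit Arguments. Unset Strict Implicit. Unset Printing Implicit Defensive.
Local Open Scope ring_scope.
Import Order.TTheory GRing.Theory Num.Theory.

(* Read the solution s_W = M(W)^-1 q as a pair (w, z) with w - M z = q, where z
   is supported on W and w off W.  Moving i into V changes z by D_i, and
   M D_i = w(V+i) - w(V); hence D_j^T M D_i = s_{V+j}(j) (s_{V+i}(j) - s_V(j))
   for i <> j, and the energy D_j^T M D_j = - s_V(j) s_{V+j}(j) is positive.
   An arc i -> j of the L-graph means that s_V(j) and s_{V+i}(j) have opposite
   signs, so |s_{V+i}(j) - s_V(j)| > |s_V(j)|, and Cauchy-Schwarz for the inner
   product given by M shows that the energy of j is smaller than that of i.
   A potential that strictly decreases along arcs excludes cycles. *)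

Lemma acyclic_of_decreasing (T : eqType) (d : Order.disp_t) (O : porderType d)
    (e : rel T) (f : T -> O) :
  (forall x y, e x y -> (f y < f x)%O) -> acyclic e.
Proof.
move=> decr [//|x s] _; apply/negP => /(sub_path decr).
have gt_trans : transitive (fun a b => (f b < f a)%O).
  by move=> b a c /[swap]; apply: lt_trans.
move=> /(order_path_min gt_trans)/allP/(_ x).
by rewrite mem_rcons mem_head ltxx => /(_ isT).
Qed.

Lemma sign_change_lt (R : realDomainType) (a x y z : R) :
  x * y < 0 -> 0 < - (z * x) -> (z * (y - x)) ^+ 2 <= a * - (z * x) ->
  - (z * x) < a.
Proof.
move=> xy_lt0 c_gt0 cs.
have : (z * x) ^+ 2 < (z * (y - x)) ^+ 2.
  have z_neq0 : z != 0 by apply: contraTneq c_gt0 => ->; rewrite mul0r oppr0 ltxx.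
  by rewrite !exprMn ltr_pM2l ?exprn_even_gt0 //; nra.
nra.
Qed.

Section Restrict.
Variables (R : pzRingType) (n : nat).

Definition restrict (W : {set 'I_n}) (s : 'cV[R]_n) : 'cV[R]_n :=
  \col_k (if k \in W then s k 0 else 0).

Lemma restrictC_add W s : restrict (~: W) s + restrict W s = s.
Proof.
apply/matrixP => k l; rewrite (ord1 l) !mxE in_setC.
by case: (k \in W); rewrite ?addr0 ?add0r.
Qed.

Lemma mulmx_MV (M : 'M[R]_n) W s :
  MV M W *m s = restrict (~: W) s - M *m restrict W s.
Proof.
apply/matrixP => k l; rewrite (ord1 l) mxE [in RHS]mxE.
have -> : restrict (~: W) s k 0 = \sum_j (k == j)%:R * restrict (~: W) s j 0.
  rewrite (bigD1 k) //= eqxx mul1r big1 ?addr0 // => j.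
  by rewrite eq_sym => /negbTE->; rewrite mul0r.
rewrite !mxE -sumrB; apply: eq_bigr => j _; rewrite /MV !mxE in_setC.
by case: (j \in W); rewrite ?mulr0 ?sub0r ?subr0 ?mulNr.
Qed.

Lemma dotmx_restrictC W (s t : 'cV[R]_n) :
  ((restrict W s)^T *m restrict (~: W) t) 0 0 = 0.
Proof.
rewrite mxE big1 // => k _; rewrite !mxE in_setC.
by case: (k \in W); rewrite ?mulr0 ?mul0r.
Qed.

Lemma dotmx_single (u v : 'cV[R]_n) k :
  (forall l, l != k -> u l 0 * v l 0 = 0) -> (u^T *m v) 0 0 = u k 0 * v k 0.
Proof.
by move=> uv0; rewrite mxE (bigD1 k) //= big1 ?addr0 ?mxE // => l /uv0; rewrite mxE.
Qed.

End Restrict.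

Section BilinearForm.
Variables (R : comPzRingType) (n : nat) (M : 'M[R]_n).

Definition bform (u v : 'cV[R]_n) : R := (u^T *m M *m v) 0 0.

Lemma bform0r u : bform u 0 = 0.
Proof. by rewrite /bform mulmx0 mxE. Qed.

Lemma bform_sym u v : M^T = M -> bform u v = bform v u.
Proof.
have tr_scalar (A : 'M[R]_1) : A 0 0 = A^T 0 0 by rewrite mxE.
by move=> M_sym; rewrite /bform tr_scalar !trmx_mul trmxK M_sym mulmxA.
Qed.

Lemma bform_expand (a b : R) u v :
  bform (a *: u - b *: v) (a *: u - b *: v) =
  a ^+ 2 * bform u u - a * b * (bform u v + bform v u) + b ^+ 2 * bform v v.
Proof.
rewrite /bform [(_ - _)^T]linearB /= !linearZ /=.
rewrite !(mulmxDl, mulmxDr, mulNmx, mulmxN, scalerN).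
by rewrite -!(scalemxAl _ _ M) -!scalemxAr -!scalemxAl !mxE; ring.
Qed.

End BilinearForm.

Section PositiveDefinite.
Variables (R : realType) (n : nat) (M : 'M[R]_n).
Hypothesis M_spd : sym_posdef M.

Lemma bform_gt0 u : u != 0 -> 0 < bform M u u.
Proof. exact: M_spd.2. Qed.

Lemma bform_ge0 u : 0 <= bform M u u.
Proof. by have [->|/bform_gt0/ltW//] := eqVneq u 0; rewrite bform0r. Qed.

Lemma bform_cauchy_schwarz u v : bform M u v ^+ 2 <= bform M u u * bform M v v.
Proof.
have [->|v_neq0] := eqVneq v 0; first by rewrite !bform0r mulr0 expr2 mulr0.
have vv_gt0 := bform_gt0 v_neq0.
have := bform_ge0 (bform M v v *: u - bform M u v *: v).
rewrite bform_expand (bform_sym v u M_spd.1) => expand_ge0.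
by rewrite -(ler_pM2l vv_gt0) -subr_ge0; nra.
Qed.

Lemma MV_unitmx W : MV M W \in unitmx.
Proof.
rewrite -unitmx_tr unitmxE unitfE; apply/negP => /det0P[v v_neq0].
move/(congr1 trmx); rewrite trmx_mul trmxK trmx0 mulmx_MV => /eqP.
rewrite subr_eq0 => /eqP w_eq.
have z0 : restrict W v^T = 0.
  have zMz0 : bform M (restrict W v^T) (restrict W v^T) = 0.
    by rewrite /bform -mulmxA -w_eq dotmx_restrictC.
  by have [//|/bform_gt0] := eqVneq (restrict W v^T) 0; rewrite zMz0 ltxx.
move: v_neq0; rewrite -(trmxK v) -(restrictC_add W v^T) w_eq z0 mulmx0 addr0.
by rewrite trmx0 eqxx.
Qed.

Variable q : 'cV[R]_n.

Definition lcp_sol (W : {set 'I_n}) : 'cV[R]_n := invmx (MV M W) *m q.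
Definition lcp_z (W : {set 'I_n}) : 'cV[R]_n := restrict W (lcp_sol W).
Definition lcp_w (W : {set 'I_n}) : 'cV[R]_n := restrict (~: W) (lcp_sol W).

Lemma lcp_solP W : lcp_w W - M *m lcp_z W = q.
Proof. by rewrite -mulmx_MV mulKVmx ?MV_unitmx. Qed.

Definition pivot_dz (V : {set 'I_n}) (i : 'I_n) : 'cV[R]_n :=
  lcp_z (i |: V) - lcp_z V.

Lemma mulmx_pivot_dz V i : M *m pivot_dz V i = lcp_w (i |: V) - lcp_w V.
Proof.
have Mz W : M *m lcp_z W = lcp_w W - q.
  by rewrite -[in RHS](lcp_solP W) opprB addrC addrNK.
by rewrite mulmxBr !Mz opprB addrA subrK.
Qed.

Lemma bform_pivot_dz (V : {set 'I_n}) (i j : 'I_n) : i \notin V -> j \notin V ->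
  bform M (pivot_dz V j) (pivot_dz V i) =
  lcp_sol (j |: V) j 0 *
    ((if j \in i |: V then 0 else lcp_sol (i |: V) j 0) - lcp_sol V j 0).
Proof.
move=> iV jV; rewrite /bform -mulmxA (dotmx_single (k := j)) mulmx_pivot_dz => [|l lj].
  by rewrite !mxE !in_setC setU11 (negbTE jV) subr0; case: (j \in i |: V).
rewrite !mxE !in_setC !in_setU1 (negbTE lj) /=.
by case: (l \in V); rewrite /= ?orbT ?subrr ?mulr0 ?mul0r.
Qed.

Hypothesis q_generic : generic_wrt M q.

Lemma pivot_dz_neq0 (V : {set 'I_n}) (j : 'I_n) : j \notin V -> pivot_dz V j != 0.
Proof.
move=> jV; apply: contra (q_generic (j |: V) j).
move=> /eqP/(congr1 (fun s : 'cV[R]_n => s j 0)).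
by rewrite !mxE setU11 (negbTE jV) subr0 => ->.
Qed.

Lemma Lgraph_sign_change (V : {set 'I_n}) (i j : 'I_n) :
  Lgraph (Dcube_outmap M q) V i j -> lcp_sol V j 0 * lcp_sol (i |: V) j 0 < 0.
Proof.
case/and4P => _ _ _; rewrite /setSD /Dcube_outmap !inE mulr_lt0 /lcp_sol !q_generic.
by case: (_ < 0); case: (_ < 0).
Qed.

Lemma Lgraph_bform_pivot_dz_lt (V : {set 'I_n}) (i j : 'I_n) :
  Lgraph (Dcube_outmap M q) V i j ->
  bform M (pivot_dz V j) (pivot_dz V j) < bform M (pivot_dz V i) (pivot_dz V i).
Proof.
move=> arc; have sign := Lgraph_sign_change arc.
case/and4P: arc => ij iV jV _.
have jj_gt0 := bform_gt0 (pivot_dz_neq0 jV).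
have cs := bform_cauchy_schwarz (pivot_dz V i) (pivot_dz V j).
rewrite (bform_sym _ _ M_spd.1) in cs.
have jiV : j \notin i |: V by rewrite in_setU1 negb_or eq_sym ij.
move: jj_gt0 cs; rewrite !bform_pivot_dz // setU11 (negbTE jiV) sub0r mulrN.
exact: sign_change_lt sign.
Qed.

End PositiveDefinite.

Theorem theorem5p2 (R : realType) (n : nat) (M : 'M[R]_n) (q : 'cV[R]_n) :
  sym_posdef M -> generic_wrt M q -> property_L (Dcube_outmap M q).
Proof.
move=> M_spd q_generic V; apply: acyclic_of_decreasing.
exact: Lgraph_bform_pivot_dz_lt.
Qed.
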